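(* Let $\mathcal{G}\rightrightarrows M$ be a topological groupoid such that $M$ is Hausdorff. Then $$\{B\subset\mathcal{G}:\ \forall K\subset\mathcal{G}\text{ compact }\exists K'\subset\mathcal{G}\text{ compact with }KB\cup BK\subset K'\}$$ $$=\{B\subset\mathcal{G}:\ \forall K\subset M\text{ compact }\exists K'\subset\mathcal{G}\text{ compact with }(B\cap t^{-1}(K))\cup(B\cap s^{-1}(K))\subset K'\},$$ and this family $\mathcal{B}_\mathcal{G}$ is a base-bounded compatible bornology on $\mathcal{G}$ containing all compact subsets of $\mathcal{G}$.
   Context: A topological groupoid $\mathcal{G}\rightrightarrows M$ is a groupoid (arrows $\mathcal{G}$, objects $M$, target and source $t,s$, units $1_x$, inverses, multiplication $g_1g_2$ defined when $s(g_1)=t(g_2)$) with $\mathcal{G}$, $M$ topological spaces and all structure maps continuous (multiplication on the subspace of composable pairs of $\mathcal{G}\times\mathcal{G}$). For $A,B\subset\mathcal{G}$, $AB=\{ab:a\in A,b\in B,s(a)=t(b)\}$ and $B^{-1}=\{b^{-1}:b\in B\}$. A bornology on a set $X$ is a family $\mathcal{B}$ of subsets closed under taking subsets and finite unions with $\bigcup\mathcal{B}=X$. A bornology on $\mathcal{G}$ is compatible if $B^{-1}\in\mathcal{B}$ and $BB'\in\mathcal{B}$ for all $B,B'\in\mathcal{B}$, and base-bounded if $1_M=\{1_x:x\in M\}\in\mathcal{B}$. *)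

From HB Require Import structures.
From mathcomp Require Import all_boot all_algebra.
From mathcomp Require Import all_classical all_reals all_analysis.
Set Implicit Arguments. Unset Strict Implicit. Unset Printing Implicit Defensive.
Local Open Scope classical_set_scope.

(* A topological groupoid G ⇉ M: arrows G, objects M, target tgt, source src,
   units unit, inverse inv, multiplication mul (a total function, only
   meaningful on composable pairs, i.e. src g1 = tgt g2). *)
Record topGroupoid (G M : topologicalType) := TopGroupoid {
  tgt : G -> M;
  src : G -> M;
  unit : M -> G;
  inv : G -> G;
  mul : G -> G -> G;
  tgt_unit : forall x, tgt (unit x) = x;
  src_unit : forall x, src (unit x) = x;
  tgt_mul : forall g h, src g = tgt h -> tgt (mul g h) = tgt g;
  src_mul : forall g h, src g = tgt h -> src (mul g h) = src h;
  mulA : forall g h k, src g = tgt h -> src h = tgt k ->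
           mul g (mul h k) = mul (mul g h) k;
  unit_mul : forall g, mul (unit (tgt g)) g = g;
  mul_unit : forall g, mul g (unit (src g)) = g;
  tgt_inv : forall g, tgt (inv g) = src g;
  src_inv : forall g, src (inv g) = tgt g;
  mul_inv : forall g, mul g (inv g) = unit (tgt g);
  inv_mul : forall g, mul (inv g) g = unit (src g);
  tgt_cont : continuous tgt;
  src_cont : continuous src;
  unit_cont : continuous unit;
  inv_cont : continuous inv;
  mul_cont : {within [set p : G * G | src p.1 = tgt p.2],
               continuous (fun p : G * G => mul p.1 p.2)}
}.

Section Ops.
Context {G M : topologicalType} (GG : topGroupoid G M).

Definition setmulG (A B : set G) : set G :=
  [set g | exists a b, [/\ A a, B b, src GG a = tgt GG b & g = mul GG a b]].

Definition setinvG (B : set G) : set G := inv GG @` B.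

Definition unitsG : set G := range (unit GG).

Definition BG1 : set (set G) :=
  [set B | forall K : set G, compact K -> exists K' : set G,
     compact K' /\ setmulG K B `|` setmulG B K `<=` K'].

Definition BG2 : set (set G) :=
  [set B | forall K : set M, compact K -> exists K' : set G,
     compact K' /\ (B `&` tgt GG @^-1` K) `|` (B `&` src GG @^-1` K) `<=` K'].

Definition compatible_bornology (F : set (set G)) : Prop :=
  (forall B B', F B -> F B' -> F (setmulG B B')) /\
  (forall B, F B -> F (setinvG B)).

Definition base_bounded (F : set (set G)) : Prop := F unitsG.
End Ops.

Definition bornology {X : Type} (F : set (set X)) : Prop :=
  [/\ (forall B A, F B -> A `<=` B -> F A),
      (forall A B, F A -> F B -> F (A `|` B)) &
      (forall x : X, exists B, F B /\ B x)].

From Pilot Require Import Defs.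
From HB Require Import structures.
From mathcomp Require Import all_boot all_algebra.
From mathcomp Require Import all_classical all_reals all_analysis.
Local Open Scope classical_set_scope.

(* Testing B against compact K ⊆ M amounts to testing it against the compact
   sets 1_K ⊆ G, since (B ∩ t^-1 K) ∪ (B ∩ s^-1 K) ⊆ 1_K B ∪ B 1_K.
   Conversely K B ⊆ K (B ∩ t^-1(s K)) and B K ⊆ (B ∩ s^-1(t K)) K, and a
   product of compact sets is compact because, M being Hausdorff, the space
   of composable pairs is closed in G × G.  In the second description the
   bornology axioms, stability under inversion and the boundedness of compact
   sets and of 1_M are immediate; stability under products follows from
   associativity in the first one. *)

Lemma compact_image {T U : topologicalType} {f : T -> U} {A : set T} :
  continuous f -> compact A -> compact (f @` A).
Proof.
by move=> f_cont; apply: continuous_compact; exact: continuous_subspaceT.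
Qed.

Lemma closed_pullback {X Y Z : topologicalType} {f : X -> Z} {g : Y -> Z} :
  hausdorff_space Z -> continuous f -> continuous g ->
  closed [set p : X * Y | f p.1 = g p.2].
Proof.
move=> hZ f_cont g_cont; rewrite -[X in closed X]setCK; apply: open_closedC.
rewrite openE => p /= fp_neq_gp.
move: hZ; rewrite open_hausdorff => /(_ (f p.1) (g p.2)).
case=> [|[U V] /= [/set_mem Ufp /set_mem Vgp] [oU oV /eqP UV0]].
  exact/eqP.
have nU : nbhs p.1 (f @^-1` U) by apply: f_cont; exact: open_nbhs_nbhs.
have nV : nbhs p.2 (g @^-1` V) by apply: g_cont; exact: open_nbhs_nbhs.
exists (f @^-1` U, g @^-1` V) => // -[x y] /= [Ufx Vgy] fx_gy.
have : (U `&` V) (f x) by split => //; rewrite fx_gy.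
by rewrite UV0.
Qed.

Section TopGroupoid.
Variables (G M : topologicalType) (GG : topGroupoid G M).

Local Notation composable := [set p : G * G | src GG p.1 = tgt GG p.2].

Lemma setmulGE (A B : set G) :
  setmulG GG A B =
  (fun p : G * G => Defs.mul GG p.1 p.2) @` (A `*` B `&` composable).
Proof.
apply/seteqP; split => g.
  by case=> a [b [Aa Bb ab ->]]; exists (a, b).
by case=> -[a b] /= [[Aa Bb] ab] <-; exists a, b.
Qed.

Lemma compact_setmulG (A B : set G) : hausdorff_space M ->
  compact A -> compact B -> compact (setmulG GG A B).
Proof.
move=> hM cA cB; rewrite setmulGE; apply: continuous_compact.
  by apply: (continuous_subspaceW _ (@Defs.mul_cont _ _ GG)); exact: subIsetr.
apply: compact_closedI; first exact: compact_setX.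
exact: closed_pullback hM (@src_cont _ _ GG) (@tgt_cont _ _ GG).
Qed.

Lemma BG2_BG1 (B : set G) : hausdorff_space M -> BG2 GG B -> BG1 GG B.
Proof.
move=> hM hB K cK.
have [Ks [cKs sKs]] := hB _ (compact_image (@src_cont _ _ GG) cK).
have [Kt [cKt sKt]] := hB _ (compact_image (@tgt_cont _ _ GG) cK).
exists (setmulG GG K Ks `|` setmulG GG Kt K).
split; first by apply: compactU; exact: compact_setmulG.
move=> _ [[k [b [Kk Bb kb ->]]]|[b [k [Bb Kk bk ->]]]].
  by left; exists k, b; split => //; apply: sKs; left; split => //; exists k.
by right; exists b, k; split => //; apply: sKt; right; split => //; exists k.
Qed.

Lemma BG1_BG2 (B : set G) : BG1 GG B -> BG2 GG B.
Proof.
move=> hB K cK.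
have [K' [cK' sK']] := hB _ (compact_image (@unit_cont _ _ GG) cK).
exists K'; split => // g [[Bg Kg]|[Bg Kg]]; apply: sK'.
  left; exists (Defs.unit GG (tgt GG g)), g.
  by split; [exists (tgt GG g) | | rewrite src_unit | rewrite unit_mul].
right; exists g, (Defs.unit GG (src GG g)).
by split; [| exists (src GG g) | rewrite tgt_unit | rewrite mul_unit].
Qed.

Lemma BG1E : hausdorff_space M -> BG1 GG = BG2 GG.
Proof.
by move=> hM; apply/seteqP; split => B; [exact: BG1_BG2 | exact: BG2_BG1].
Qed.

Lemma BG2_compact (K : set G) : compact K -> BG2 GG K.
Proof. by move=> cK C _; exists K; split => // g [[]|[]]. Qed.

Lemma BG2_subset (A B : set G) : BG2 GG B -> A `<=` B -> BG2 GG A.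
Proof.
move=> hB AB C cC; have [K' [cK' sK']] := hB C cC.
exists K'; split => // g [[Ag Cg]|[Ag Cg]]; apply: sK'.
  by left; split => //; apply: AB.
by right; split => //; apply: AB.
Qed.

Lemma BG2_setU (A B : set G) : BG2 GG A -> BG2 GG B -> BG2 GG (A `|` B).
Proof.
move=> hA hB C cC.
have [KA [cKA sKA]] := hA C cC; have [KB [cKB sKB]] := hB C cC.
exists (KA `|` KB); split; first exact: compactU.
move=> g [[[Ag|Bg] Cg]|[[Ag|Bg] Cg]].
- by left; apply: sKA; left.
- by right; apply: sKB; left.
- by left; apply: sKA; right.
- by right; apply: sKB; right.
Qed.

Lemma bornology_BG2 : bornology (BG2 GG).
Proof.
split; [by move=> B A; exact: BG2_subset | exact: BG2_setU |].
move=> x; exists [set x]; split => //.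
by apply: BG2_compact; exact: compact_set1.
Qed.

Lemma BG2_setinvG (B : set G) : BG2 GG B -> BG2 GG (setinvG GG B).
Proof.
move=> hB C cC; have [K' [cK' sK']] := hB C cC.
exists (Defs.inv GG @` K').
split; first exact: compact_image (@inv_cont _ _ GG) cK'.
move=> _ [[[b Bb <-] Cb]|[[b Bb <-] Cb]]; exists b => //; apply: sK'.
  by right; split => //; rewrite /= -tgt_inv.
by left; split => //; rewrite /= -src_inv.
Qed.

Lemma BG2_unitsG : BG2 GG (unitsG GG).
Proof.
move=> C cC; exists (Defs.unit GG @` C).
split; first exact: compact_image (@unit_cont _ _ GG) cC.
by move=> _ [[[x _ <-] Cx]|[[x _ <-] Cx]]; exists x;
  rewrite // /= ?tgt_unit ?src_unit in Cx.
Qed.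

(* K (B B') = (K B) B' and (B B') K = B (B' K). *)
Lemma BG1_setmulG (B B' : set G) :
  BG1 GG B -> BG1 GG B' -> BG1 GG (setmulG GG B B').
Proof.
move=> hB hB' K cK.
have [KB [cKB sKB]] := hB K cK; have [KBB' [cKBB' sKBB']] := hB' KB cKB.
have [B'K [cB'K sB'K]] := hB' K cK; have [BB'K [cBB'K sBB'K]] := hB B'K cB'K.
exists (KBB' `|` BB'K); split; first exact: compactU.
move=> _ [[k [_ [Kk [b [b' [Bb B'b' bb' ->]]] kbb' ->]]]
         |[_ [k [[b [b' [Bb B'b' bb' ->]]] Kk bb'k ->]]]].
- rewrite tgt_mul // in kbb'; left; apply: sKBB'; left.
  exists (Defs.mul GG k b), b'; split; rewrite ?src_mul ?Defs.mulA //.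
  by apply: sKB; left; exists k, b.
- rewrite src_mul // in bb'k; right; apply: sBB'K; right.
  exists b, (Defs.mul GG b' k); split; rewrite ?tgt_mul ?Defs.mulA //.
  by apply: sB'K; right; exists b', k.
Qed.

End TopGroupoid.

Theorem proposition7p5 (G M : topologicalType) (GG : topGroupoid G M) :
  hausdorff_space M ->
  BG1 GG = BG2 GG /\
  [/\ bornology (BG1 GG), compatible_bornology GG (BG1 GG),
      base_bounded GG (BG1 GG) &
      (forall K : set G, compact K -> BG1 GG K)].
Proof.
move=> hM; have E := @BG1E _ _ GG hM.
split => //; split; rewrite E.
- exact: bornology_BG2.
- split; last exact: BG2_setinvG.
  by rewrite -E; exact: BG1_setmulG.
- exact: BG2_unitsG.
- exact: BG2_compact.
Qed.
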